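(* For integers $j,r$ with $2\le j\le n-1$ and $0\le r\le j-2$, let $\pi_{j,r}=s_j\cdot s_{j-1}\cdots s_{j-r}$. Then $w_j\cdot\pi_{j,r}=\pi_{j,r}\cdot w_{j-r-1}$ and $\ell(w_j\cdot\pi_{j,r})=\ell(\pi_{j,r})+2(j-r-1)$.
   Context: $D_n$ ($n\ge2$) is the Coxeter group with generators $s_{1'},s_1,\dots,s_{n-1}$ and relations $s^2=1$, $(s_i s_{i+1})^3=1$, $(s_is_j)^2=1$ for $|i-j|\ge 2$, $(s_{1'}s_2)^3=1$, $(s_{1'}s_i)^2=1$ for $i\ne 2$. $w_k=s_k s_{k-1}\cdots s_2 s_1 s_{1'} s_2\cdots s_k$ for $1\le k\le n-1$; $\ell$ is Coxeter length with respect to $\{s_{1'},s_1,\dots,s_{n-1}\}$. *)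

From mathcomp Require Import all_boot.
From Stdlib Require Import Relation_Operators ClassicalEpsilon.
Set Implicit Arguments. Unset Strict Implicit. Unset Printing Implicit Defensive.

(* Generators of D_n are indexed by 'I_n:
   index 0 stands for s_{1'}, index i (1 <= i <= n-1) stands for s_i.
   Elements of D_n are represented by words (seq 'I_n) modulo the
   congruence generated by the Coxeter relations. *)

Definition coxm (n : nat) (a b : 'I_n) : nat :=
  if a == b then 1
  else if (val a == 0) || (val b == 0) then
         (if val a + val b == 2 then 3 else 2)   (* (s_1' s_2)^3, (s_1' s_i)^2 *)
       else if (val a).+1 == val b then 3
       else if (val b).+1 == val a then 3
       else 2.

Definition relator (n : nat) (a b : 'I_n) : seq 'I_n :=
  flatten (nseq (coxm a b) [:: a; b]).

Inductive rel_step (n : nat) : seq 'I_n -> seq 'I_n -> Prop :=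
| RelIns (u v : seq 'I_n) (a b : 'I_n) : rel_step (u ++ v) (u ++ relator a b ++ v).

Definition weq (n : nat) : seq 'I_n -> seq 'I_n -> Prop :=
  clos_refl_sym_trans (seq 'I_n) (@rel_step n).

Definition has_word_of_size (n : nat) (w : seq 'I_n) (k : nat) : bool :=
  if excluded_middle_informative (exists w' : seq 'I_n, size w' = k /\ weq w w')
  then true else false.

Lemma has_word_of_size_ex (n : nat) (w : seq 'I_n) : exists k, has_word_of_size w k.
Proof.
exists (size w); rewrite /has_word_of_size.
case: excluded_middle_informative => // [[]].
by exists w; split => //; apply: rst_refl.
Qed.

Definition coxlen (n : nat) (w : seq 'I_n) : nat := ex_minn (has_word_of_size_ex w).

Definition gen (n : nat) (k : nat) : seq 'I_n :=
  if insub k is Some i then [:: i] else [::].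

Definition word_of (n : nat) (ks : seq nat) : seq 'I_n := flatten (map (@gen n) ks).

(* w_k = s_k s_{k-1} ... s_2 s_1 s_{1'} s_2 ... s_k *)
Definition w_word (n k : nat) : seq 'I_n :=
  word_of n (rev (iota 1 k) ++ [:: 0] ++ iota 2 k.-1).

Definition pi_word (n j r : nat) : seq 'I_n :=
  word_of n (rev (iota (j - r) r.+1)).

(** D_n acts on {±1, ..., ±n} by signed permutations: s_{1'} swaps 1 with -2 and 2 with -1,
    and s_i swaps ±i with ±(i+1). Equal words act equally, and a generator changes the number
    of type-D inversions by at most one, so the inversion number of the action of a word is a
    lower bound for its length. Now w_k acts as the sign change of 1 and k+1, and pi_{j,r} as
    the cycle j-r -> j-r+1 -> ... -> j+1 -> j-r; counting inversions shows that the words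
    pi_{j,r} and pi_{j,r} w_{j-r-1} are reduced. The commutation relation itself follows by
    induction on r from w_j = s_j w_{j-1} s_j and pi_{j,r+1} = s_j pi_{j-1,r}. *)

From Stdlib Require Import ZArith Lia Relation_Operators ClassicalEpsilon.
From mathcomp Require Import all_boot zify ssrZ.
Set Implicit Arguments. Unset Strict Implicit. Unset Printing Implicit Defensive.

Lemma iotaSr m k : iota m k.+1 = iota m k ++ [:: m + k].
Proof. by rewrite -addn1 iotaD. Qed.

Lemma rev_iotaS m k : rev (iota m k.+1) = m + k :: rev (iota m k).
Proof. by rewrite iotaSr rev_cat. Qed.

Lemma count_uniq_le2 (T : eqType) (P : pred T) (s : seq T) (x1 x2 : T) :
  uniq s -> {in s, forall x, P x -> x = x1 \/ x = x2} -> count P s <= 2.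
Proof.
move=> s_uniq Ps; rewrite -size_filter.
apply: (@uniq_leq_size _ _ [:: x1; x2]); first exact: filter_uniq.
by move=> x; rewrite mem_filter => /andP[Px /Ps /(_ Px)] [] ->; rewrite !inE eqxx ?orbT.
Qed.

Local Open Scope Z_scope.

Definition swap_neg12 (y : Z) : Z :=
  if y =? 1 then -2 else if y =? -2 then 1
  else if y =? 2 then -1 else if y =? -1 then 2 else y.

Definition swap_adj (a y : Z) : Z :=
  if y =? a then a + 1 else if y =? a + 1 then a
  else if y =? - a then - a - 1 else if y =? - a - 1 then - a else y.

Variant swap_neg12_spec (y : Z) : Z -> Prop :=
  | SwapNeg12_1 of y = 1 : swap_neg12_spec y (-2)
  | SwapNeg12_N2 of y = -2 : swap_neg12_spec y 1
  | SwapNeg12_2 of y = 2 : swap_neg12_spec y (-1)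
  | SwapNeg12_N1 of y = -1 : swap_neg12_spec y 2
  | SwapNeg12_fix of y <> 1 & y <> -2 & y <> 2 & y <> -1 : swap_neg12_spec y y.

Lemma swap_neg12P y : swap_neg12_spec y (swap_neg12 y).
Proof.
rewrite /swap_neg12.
by do 4?[case: Z.eqb_spec => [->|?]; first by constructor]; constructor.
Qed.

Variant swap_adj_spec (a y : Z) : Z -> Prop :=
  | SwapAdj_a of y = a : swap_adj_spec a y (a + 1)
  | SwapAdj_S of y = a + 1 : swap_adj_spec a y a
  | SwapAdj_N of y = - a : swap_adj_spec a y (- a - 1)
  | SwapAdj_NS of y = - a - 1 : swap_adj_spec a y (- a)
  | SwapAdj_fix of y <> a & y <> a + 1 & y <> - a & y <> - a - 1 : swap_adj_spec a y y.

Lemma swap_adjP a y : swap_adj_spec a y (swap_adj a y).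
Proof.
rewrite /swap_adj.
by do 4?[case: Z.eqb_spec => [->|?]; first by constructor]; constructor.
Qed.

(* Case analysis on the innermost generator applications and comparisons only, so that
   every branch is closed by linear arithmetic. *)
Ltac innermost t :=
  lazymatch t with
  | context [swap_adj _ _] => fail | context [swap_neg12 _] => fail
  | context [if _ then _ else _] => fail | _ => idtac
  end.

Ltac split_case :=
  match goal with
  | |- context [swap_adj ?a ?y] => innermost y; case: (swap_adjP a y)
  | |- context [swap_neg12 ?y] => innermost y; case: (swap_neg12P y)
  | |- context [?u =? ?v] => innermost u; innermost v; case: (Z.eqb_spec u v)
  | |- context [?u <? ?v] => innermost u; innermost v; case: (Z.ltb_spec u v)
  | |- context [?u <=? ?v] => innermost u; innermost v; case: (Z.leb_spec u v)
  | H : context [swap_adj ?a ?y] |- _ => innermost y; move: H; case: (swap_adjP a y)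
  | H : context [swap_neg12 ?y] |- _ => innermost y; move: H; case: (swap_neg12P y)
  | H : context [?u =? ?v] |- _ => innermost u; innermost v; move: H; case: (Z.eqb_spec u v)
  | H : context [?u <? ?v] |- _ => innermost u; innermost v; move: H; case: (Z.ltb_spec u v)
  | H : context [?u <=? ?v] |- _ => innermost u; innermost v; move: H; case: (Z.leb_spec u v)
  end; intros; cbn [andb orb negb] in *.

Ltac solve_by_cases := repeat (split_case; try done; try lia); try done; lia.

Definition gact (i : nat) : Z -> Z :=
  if i is i'.+1 then swap_adj (Z.of_nat i) else swap_neg12.

Lemma gactK i : involutive (gact i).
Proof. by case: i => [|i] y; cbn [gact]; solve_by_cases. Qed.

Lemma gactN i y : gact i (- y) = - gact i y.
Proof. by case: i => [|i]; cbn [gact]; solve_by_cases. Qed.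

Definition gacts (ks : seq nat) (y : Z) : Z := foldl (fun z k => gact k z) y ks.

Definition wact (n : nat) (w : seq 'I_n) : Z -> Z := gacts (map val w).

Lemma gacts_cat ks ls y : gacts (ks ++ ls) y = gacts ls (gacts ks y).
Proof. by rewrite /gacts foldl_cat. Qed.

Lemma wact_cat n (u v : seq 'I_n) y : wact (u ++ v) y = wact v (wact u y).
Proof. by rewrite /wact map_cat gacts_cat. Qed.

Lemma gacts_iter_pair a b m y :
  gacts (flatten (nseq m [:: a; b])) y = iter m (gact b \o gact a) y.
Proof. by elim: m y => // m IH y; rewrite iterSr -IH. Qed.

Lemma wact_relator n (a b : 'I_n) : wact (relator a b) =1 id.
Proof.
move=> y; rewrite /wact /relator map_flatten map_nseq gacts_iter_pair /coxm -val_eqE.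
move: (val a) (val b) => [|i] [|k]; repeat (case: eqP => ?; cbn [orb]).
all: by cbn [iter comp gact]; solve_by_cases.
Qed.

Lemma weq_wact n (u v : seq 'I_n) : weq u v -> wact u =1 wact v.
Proof.
elim=> {u v} [_ _ [u v a b] y | // | u v _ IH y | u v w _ IH1 _ IH2 y].
- by rewrite !wact_cat wact_relator.
- by rewrite IH.
- by rewrite IH1 IH2.
Qed.

Definition signed_range (n : nat) : seq Z :=
  [seq Z.of_nat k | k <- iota 1 n] ++ [seq - Z.of_nat k | k <- iota 1 n].

Lemma signed_rangeP n y : reflect (1 <= Z.abs y <= Z.of_nat n) (y \in signed_range n).
Proof.
apply: (iffP idP); first by rewrite mem_cat => /orP[] /mapP[k]; rewrite mem_iota => ? ->; lia.
move=> y_range; rewrite mem_cat; apply/orP.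
by case: (Z.leb_spec 0 y) => ?; [left | right]; apply/mapP; exists (Z.abs_nat y);
  rewrite ?mem_iota; lia.
Qed.

Lemma signed_range_uniq n : uniq (signed_range n).
Proof.
rewrite cat_uniq !map_inj_uniq ?iota_uniq ?andbT /=; try by move=> ? ? ?; lia.
apply/hasPn => y /mapP[k]; rewrite mem_iota => k_pos ->.
by apply/negP => /mapP[k' _]; lia.
Qed.

Lemma gact_signed_range n i y : (2 <= n)%N -> (i < n)%N ->
  (gact i y \in signed_range n) = (y \in signed_range n).
Proof.
move=> n_ge2 i_lt_n; apply/signed_rangeP/signed_rangeP; case: i i_lt_n => [|i] ?; cbn [gact]; solve_by_cases.
Qed.

Lemma perm_map_gact_signed_range n i : (2 <= n)%N -> (i < n)%N ->
  perm_eq (map (gact i) (signed_range n)) (signed_range n).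
Proof.
move=> n_ge2 i_lt_n; apply: uniq_perm; rewrite ?signed_range_uniq //.
  by rewrite map_inj_uniq ?signed_range_uniq //; apply: can_inj (gactK i).
move=> y; apply/mapP/idP => [[z z_in ->] | y_in]; first by rewrite gact_signed_range.
by exists (gact i y); rewrite ?gactK ?gact_signed_range.
Qed.

Definition range_pairs (n : nat) : seq (Z * Z) :=
  [seq (a, b) | a <- signed_range n, b <- signed_range n].

Lemma range_pairsP n a b :
  reflect ((1 <= Z.abs a <= Z.of_nat n) /\ (1 <= Z.abs b <= Z.of_nat n))
          ((a, b) \in range_pairs n).
Proof.
apply: (iffP allpairsP) => [[[c d] [/signed_rangeP ? /signed_rangeP ? [-> ->]]] //|[? ?]].
by exists (a, b); split=> //; apply/signed_rangeP.
Qed.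

Lemma range_pairs_uniq n : uniq (range_pairs n).
Proof. by apply: allpairs_uniq; rewrite ?signed_range_uniq // => -[? ?] [? ?] _ _ [-> ->]. Qed.

Lemma perm_map_gact_range_pairs n i : (2 <= n)%N -> (i < n)%N ->
  perm_eq [seq (gact i p.1, gact i p.2) | p <- range_pairs n] (range_pairs n).
Proof.
move=> n_ge2 i_lt_n; have perm_s := perm_map_gact_signed_range n_ge2 i_lt_n.
rewrite map_allpairs /=.
have -> : [seq (gact i a, gact i b) | a <- signed_range n, b <- signed_range n] =
    [seq (a, b) | a <- map (gact i) (signed_range n), b <- map (gact i) (signed_range n)].
  by rewrite allpairs_mapl allpairs_mapr.
exact: perm_allpairs.
Qed.

Definition inverted (x : Z -> Z) (p : Z * Z) : bool :=
  [&& p.1 <? p.2, ~~ (p.1 =? - p.2) & x p.2 <? x p.1].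

Lemma invertedP x a b :
  reflect (a < b /\ a <> - b /\ x b < x a) (inverted x (a, b)).
Proof. by apply: (iffP idP); rewrite /inverted /=; solve_by_cases. Qed.

Definition reversed_by (i : nat) (p : Z * Z) : bool :=
  [&& p.2 <? p.1, ~~ (p.1 =? - p.2) & gact i p.1 <? gact i p.2].

Lemma reversed_byP i a b :
  reflect (b < a /\ a <> - b /\ gact i a < gact i b) (reversed_by i (a, b)).
Proof. by apply: (iffP idP); rewrite /reversed_by /=; solve_by_cases. Qed.

Lemma count_reversed_by n i : (count (reversed_by i) (range_pairs n) <= 2)%N.
Proof.
case: i => [|i].
- apply: (@count_uniq_le2 _ _ _ (1, -2) (2, -1)); rewrite ?range_pairs_uniq //.
  move=> [a b] /range_pairsP ab_range rev_ab.
  suff [[-> ->] | [-> ->]] : (a = 1 /\ b = -2) \/ (a = 2 /\ b = -1) by [left | right].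
  by move: rev_ab; rewrite /reversed_by /=; solve_by_cases.
- pose k := Z.of_nat i.+1.
  apply: (@count_uniq_le2 _ _ _ (k + 1, k) (- k, - k - 1)); rewrite ?range_pairs_uniq //.
  move=> [a b] /range_pairsP ab_range rev_ab.
  suff [[-> ->] | [-> ->]] : (a = k + 1 /\ b = k) \/ (a = - k /\ b = - k - 1) by [left | right].
  by move: rev_ab; rewrite /reversed_by /=; solve_by_cases.
Qed.

Lemma inverted_comp_gact i x a b :
  inverted (x \o gact i) (gact i a, gact i b) -> inverted x (a, b) || reversed_by i (a, b).
Proof.
move=> /invertedP[lt_s [neq_s]]; rewrite /= !gactK => lt_x.
have neq_ab : a <> - b by move=> eq_ab; apply: neq_s; rewrite eq_ab gactN.
case: (Z.lt_total a b) => [lt_ab | [eq_ab | lt_ba]].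
- by apply/orP; left; apply/invertedP.
- by move: lt_s; rewrite eq_ab; lia.
- by apply/orP; right; apply/reversed_byP.
Qed.

(* Each type-D inversion is counted twice, as (a, b) and as (-b, -a). *)
Definition ninv (n : nat) (x : Z -> Z) : nat := count (inverted x) (range_pairs n).

Lemma eq_ninv n x1 x2 : x1 =1 x2 -> ninv n x1 = ninv n x2.
Proof. by move=> eq_x; apply: eq_count => -[a b]; rewrite /inverted /= !eq_x. Qed.

Lemma ninv_id n : ninv n id = 0%N.
Proof.
rewrite /ninv (@eq_count _ _ pred0) ?count_pred0 // => -[a b] /=.
by apply/negbTE/invertedP; lia.
Qed.

Lemma ninv_comp_gact n i x : (2 <= n)%N -> (i < n)%N ->
  (ninv n (x \o gact i) <= ninv n x + 2)%N.
Proof.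
move=> n_ge2 i_lt_n.
rewrite /ninv -(permP (perm_map_gact_range_pairs n_ge2 i_lt_n)) count_map.
apply: (@leq_trans (count (predU (inverted x) (reversed_by i)) (range_pairs n))).
  by apply: sub_count => -[a b] /inverted_comp_gact.
apply: (@leq_trans (count (inverted x) (range_pairs n) + count (reversed_by i) (range_pairs n))).
  by rewrite -count_predUI leq_addr.
by rewrite leq_add2l count_reversed_by.
Qed.

Lemma ninv_gacts n ks : (2 <= n)%N -> all (fun k => k < n)%N ks ->
  (ninv n (gacts ks) <= 2 * size ks)%N.
Proof.
move=> n_ge2; elim: ks => [_ | k ks IH /andP[k_lt_n /IH ninv_ks]]; first by rewrite ninv_id.
apply: leq_trans (ninv_comp_gact (gacts ks) n_ge2 k_lt_n) _.
by rewrite /= mulnS addnC leq_add2l.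
Qed.

Definition rot_up (m k : nat) (y : Z) : Z :=
  let a := Z.of_nat m in let b := Z.of_nat (m + k) in
  if (a <=? y) && (y <? b) then y + 1 else if y =? b then a
  else if (- b <? y) && (y <=? - a) then y - 1 else if y =? - b then - a else y.

Definition rot_down (m k : nat) (y : Z) : Z :=
  let a := Z.of_nat m in let b := Z.of_nat (m + k) in
  if (a <? y) && (y <=? b) then y - 1 else if y =? a then b
  else if (- b <=? y) && (y <? - a) then y + 1 else if y =? - a then - b else y.

Definition negate_ends (k : nat) (y : Z) : Z :=
  if (Z.abs y =? 1) || (Z.abs y =? Z.of_nat k + 1) then - y else y.

Lemma gact_pos i : (0 < i)%N -> gact i = swap_adj (Z.of_nat i).
Proof. by case: i. Qed.

Lemma gacts_rev_iota m k : (0 < m)%N -> gacts (rev (iota m k)) =1 rot_up m k.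
Proof.
move=> m_gt0; elim: k => [|k IH] y; first by rewrite /rot_up /=; solve_by_cases.
rewrite rev_iotaS /gacts /= -/(gacts _ _) IH gact_pos ?addn_gt0 ?m_gt0 //.
by rewrite /rot_up; solve_by_cases.
Qed.

Lemma gacts_iota m k : (0 < m)%N -> gacts (iota m k) =1 rot_down m k.
Proof.
elim: k m => [|k IH] m m_gt0 y; first by rewrite /rot_down /=; solve_by_cases.
rewrite /= /gacts /= -/(gacts _ _) IH // gact_pos //.
by rewrite /rot_down; solve_by_cases.
Qed.

Lemma gacts_w k : (0 < k)%N ->
  gacts (rev (iota 1 k) ++ [:: 0%N] ++ iota 2 k.-1) =1 negate_ends k.
Proof.
move=> k_gt0 y; rewrite !gacts_cat gacts_rev_iota // gacts_iota //=.
by rewrite /rot_up /rot_down /negate_ends; solve_by_cases.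
Qed.

Lemma ninv_ge_size n x (T : seq (Z * Z)) : uniq T ->
  {subset T <= [pred p | (p \in range_pairs n) && inverted x p]} -> (size T <= ninv n x)%N.
Proof.
move=> T_uniq T_sub; rewrite /ninv -size_filter; apply: uniq_leq_size => // p /T_sub.
by rewrite mem_filter andbC.
Qed.

Lemma disjoint_maps (f g : nat -> Z * Z) s t :
  (forall a b, a \in s -> b \in t -> f a <> g b) -> ~~ has (mem (map f s)) (map g t).
Proof.
move=> fg; apply/hasPn => _ /mapP[b b_in ->]; apply/negP => /mapP[a a_in /esym].
exact: fg.
Qed.

Ltac uniq_families :=
  rewrite ?cat_uniq ?has_cat ?negb_or; repeat (apply/andP; split);
  first [ rewrite map_inj_in_uniq ?iota_uniq // => a a' _ _ /pair_equal_spec; lia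
        | apply: disjoint_maps => a a'; rewrite !mem_iota => ? ? /pair_equal_spec; lia ].

Lemma ninv_rot_up n m k : (0 < m)%N -> (m + k <= n)%N -> (2 * k <= ninv n (rot_up m k))%N.
Proof.
move=> m_gt0 mk_le_n; pose b := Z.of_nat (m + k).
pose T := [seq (Z.of_nat a, b) | a <- iota m k] ++ [seq (- b, - Z.of_nat a) | a <- iota m k].
have -> : (2 * k = size T)%N by rewrite size_cat !size_map size_iota; lia.
apply: ninv_ge_size; first by uniq_families.
move=> p; rewrite mem_cat => /orP[] /mapP[a]; rewrite mem_iota => a_range -> /=;
  (apply/andP; split; [apply/range_pairsP | apply/invertedP]); rewrite /rot_up /b; solve_by_cases.
Qed.

Lemma ninv_rot_up_negate_ends n j r : (r.+1 < j < n)%N ->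
  (2 * r.+1 + 4 * (j - r - 1) <= ninv n (rot_up (j - r) r.+1 \o negate_ends j))%N.
Proof.
move=> r_j_n; pose b := Z.of_nat j + 1.
pose T := [seq (Z.of_nat a, b) | a <- iota 1 j] ++ [seq (- b, - Z.of_nat a) | a <- iota 1 j] ++
  [seq (- b, Z.of_nat a) | a <- iota 1 (j - r - 1)] ++ [seq (- Z.of_nat a, b) | a <- iota 1 (j - r - 1)].
have -> : (2 * r.+1 + 4 * (j - r - 1) = size T)%N by rewrite !size_cat !size_map !size_iota; lia.
apply: ninv_ge_size; first by uniq_families.
move=> p; rewrite !mem_cat => /or4P[] /mapP[a]; rewrite mem_iota => a_range -> /=;
  (apply/andP; split; [apply/range_pairsP | apply/invertedP]); rewrite /comp /rot_up /negate_ends /b; solve_by_cases.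
Qed.

Local Close Scope Z_scope.

Lemma has_word_of_sizeP n (w : seq 'I_n) k :
  reflect (exists w', size w' = k /\ weq w w') (has_word_of_size w k).
Proof. by rewrite /has_word_of_size; case: excluded_middle_informative; constructor. Qed.

Lemma coxlen_le_size n (w w' : seq 'I_n) : weq w w' -> coxlen w <= size w'.
Proof.
move=> eq_w; rewrite /coxlen; case: ex_minnP => m _; apply.
by apply/has_word_of_sizeP; exists w'.
Qed.

Lemma ninv_le_coxlen n (w : seq 'I_n) : 2 <= n -> ninv n (wact w) <= 2 * coxlen w.
Proof.
move=> n_ge2; rewrite /coxlen; case: ex_minnP => m /has_word_of_sizeP[w' [<- eq_w]] _.
rewrite (eq_ninv n (weq_wact eq_w)) -(size_map val) /wact.
apply: (ninv_gacts n_ge2); apply/allP => _ /mapP[a _ ->]; exact: ltn_ord.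
Qed.

Lemma gen_ord n k (k_lt_n : k < n) : gen n k = [:: Ordinal k_lt_n].
Proof. by rewrite /gen insubT. Qed.

Lemma word_of_cat n ks ls : word_of n (ks ++ ls) = word_of n ks ++ word_of n ls.
Proof. by rewrite /word_of map_cat flatten_cat. Qed.

Lemma map_val_word_of n ks : all (fun k => k < n) ks -> map val (word_of n ks) = ks.
Proof.
elim: ks => //= k ks IH /andP[k_lt_n /IH map_ks].
by rewrite -[word_of n _]/(gen n k ++ word_of n ks) (gen_ord k_lt_n) /= map_ks.
Qed.

Lemma wact_word_of n ks : all (fun k => k < n) ks -> wact (word_of n ks) = gacts ks.
Proof. by move=> ks_lt_n; rewrite /wact map_val_word_of. Qed.

Lemma size_word_of n ks : all (fun k => k < n) ks -> size (word_of n ks) = size ks.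
Proof. by move=> ks_lt_n; rewrite -(size_map val) map_val_word_of. Qed.

Lemma w_indices_lt n k : k < n -> all (fun i => i < n) (rev (iota 1 k) ++ [:: 0] ++ iota 2 k.-1).
Proof. by move=> k_lt_n; apply/allP => i; rewrite !mem_cat mem_rev !mem_iota inE; lia. Qed.

Lemma pi_indices_lt n j r : r < j < n -> all (fun i => i < n) (rev (iota (j - r) r.+1)).
Proof. by move=> r_j_n; apply/allP => i; rewrite mem_rev mem_iota; lia. Qed.

Lemma wact_w_word n k : 0 < k < n -> wact (w_word n k) =1 negate_ends k.
Proof.
by case/andP=> k_gt0 k_lt_n; rewrite /w_word wact_word_of ?w_indices_lt //; apply: gacts_w.
Qed.

Lemma size_w_word n k : 0 < k < n -> size (w_word n k) = 2 * k.
Proof.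
case/andP=> k_gt0 k_lt_n; rewrite /w_word size_word_of ?w_indices_lt //.
by rewrite !size_cat size_rev !size_iota /=; lia.
Qed.

Lemma wact_pi_word n j r : r < j < n -> wact (pi_word n j r) =1 rot_up (j - r) r.+1.
Proof. by move=> r_j_n; rewrite /pi_word wact_word_of ?pi_indices_lt //; apply: gacts_rev_iota; lia. Qed.

Lemma size_pi_word n j r : r < j < n -> size (pi_word n j r) = r.+1.
Proof. by move=> r_j_n; rewrite /pi_word size_word_of ?pi_indices_lt // size_rev size_iota. Qed.

Lemma weq_ctx n (p q u v : seq 'I_n) : weq u v -> weq (p ++ u ++ q) (p ++ v ++ q).
Proof.
elim=> {u v} [_ _ [u v a b] | u | u v _ IH | u v w _ IH1 _ IH2].
- by rewrite -!catA; apply: rst_step; have := RelIns (p ++ u) (v ++ q) a b; rewrite -!catA.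
- exact: rst_refl.
- exact: rst_sym.
- exact: rst_trans IH2.
Qed.

Lemma weq_cancel n (u v : seq 'I_n) a : weq (u ++ [:: a; a] ++ v) (u ++ v).
Proof.
apply: rst_sym; apply: rst_step.
by have -> : [:: a; a] = relator a a by rewrite /relator /coxm eqxx.
Qed.

Lemma w_word_rec n j : 1 < j < n -> w_word n j = gen n j ++ w_word n j.-1 ++ gen n j.
Proof.
case: j => [|[|j]] // /andP[_ j_lt_n]; rewrite /w_word rev_iotaS [iota 2 _]iotaSr add1n add2n.
by rewrite -cat1s !word_of_cat -!catA /word_of /= cats0.
Qed.

Lemma pi_word0 n j : pi_word n j 0 = gen n j.
Proof. by rewrite /pi_word subn0 /word_of /= cats0. Qed.

Lemma pi_word_rec n j r : r < j -> pi_word n j r.+1 = gen n j ++ pi_word n j.-1 r.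
Proof.
move=> r_lt_j; rewrite /pi_word rev_iotaS.
have -> : j - r.+1 + r.+1 = j by lia.
by have -> : j.-1 - r = j - r.+1 by lia.
Qed.

Lemma weq_w_word_gen n j v : 1 < j < n ->
  weq (w_word n j ++ gen n j ++ v) (gen n j ++ w_word n j.-1 ++ v).
Proof.
move=> j_range; have j_lt_n : j < n by case/andP: j_range.
rewrite w_word_rec // (gen_ord j_lt_n) -!catA /=.
exact: (weq_cancel (_ :: _)).
Qed.

Lemma weq_w_word_pi_word n j r : r.+1 < j < n ->
  weq (w_word n j ++ pi_word n j r) (pi_word n j r ++ w_word n (j - r - 1)).
Proof.
elim: r j => [|r IH] j /andP[r_lt_j j_lt_n].
  by have := @weq_w_word_gen n j [::]; rewrite pi_word0 !cats0 subn0 subn1; apply; lia.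
rewrite pi_word_rec; last lia.
apply: rst_trans (weq_w_word_gen _ _) _; first lia.
have := @weq_ctx n (gen n j) [::] _ _ (IH j.-1 _); rewrite !cats0 -catA.
by rewrite (_ : j.-1 - r - 1 = j - r.+1 - 1); [apply; lia | lia].
Qed.

Theorem mainTheorem13 (n j r : nat) :
  2 <= n -> 2 <= j -> j <= n - 1 -> r <= j - 2 ->
  weq (w_word n j ++ pi_word n j r) (pi_word n j r ++ w_word n (j - r - 1)) /\
  coxlen (w_word n j ++ pi_word n j r) = coxlen (pi_word n j r) + 2 * (j - r - 1).
Proof.
move=> n_ge2 j_ge2 j_le r_le.
have r_j_n : r.+1 < j < n by lia.
have r_lt_j_n : r < j < n by lia.
have eq_w := weq_w_word_pi_word r_j_n.
split=> //.
have wact_w_pi : wact (w_word n j ++ pi_word n j r) =1 rot_up (j - r) r.+1 \o negate_ends j.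
  by move=> y; rewrite wact_cat wact_w_word ?wact_pi_word //; lia.
have ub_w_pi := coxlen_le_size eq_w.
rewrite size_cat size_pi_word // size_w_word in ub_w_pi; last by lia.
have ub_pi := coxlen_le_size (@rst_refl _ _ (pi_word n j r)).
rewrite size_pi_word // in ub_pi.
have lb_w_pi := ninv_le_coxlen (w_word n j ++ pi_word n j r) n_ge2.
rewrite (eq_ninv n wact_w_pi) in lb_w_pi.
have lb_pi := ninv_le_coxlen (pi_word n j r) n_ge2.
rewrite (eq_ninv n (wact_pi_word r_lt_j_n)) in lb_pi.
have := ninv_rot_up_negate_ends r_j_n.
have : 2 * r.+1 <= ninv n (rot_up (j - r) r.+1) by apply: ninv_rot_up; lia.
lia.
Qed.
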